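(* Let $p,q\ge 1$ be integers. For an integer $n\ge 1$, let $\mathcal{M}^{[1,1+n]}$ denote the Lie group whose underlying manifold is $\mathbb{R}\times\mathbb{R}^{n}$, with points written $\Upsilon=[\Upsilon_1,\boldsymbol{\Upsilon}_2]^\intercal$ ($\Upsilon_1\in\mathbb{R}$, $\boldsymbol{\Upsilon}_2\in\mathbb{R}^n$), and with group operation $$\Psi*\Upsilon=\begin{bmatrix}\Upsilon_1+\Psi_1\\ \boldsymbol{\Upsilon}_2+e^{-\Upsilon_1}\boldsymbol{\Psi}_2\end{bmatrix}.$$ Let $h:\mathcal{M}^{[1,1+q]}\to\mathcal{M}^{[1,1+p]}$ be a Lie group homomorphism whose image $h(\mathcal{M}^{[1,1+q]})$ has dimension greater than $1$. Then there exist a unique matrix $W\in\mathbb{R}^{p\times q}$ and a unique vector $\boldsymbol{b}\in\mathbb{R}^p$ such that for all $\Upsilon\in\mathcal{M}^{[1,1+q]}$, $$h(\Upsilon)=\begin{bmatrix}\Upsilon_1\\ W\boldsymbol{\Upsilon}_2+(1-e^{-\Upsilon_1})\,\boldsymbol{b}\end{bmatrix}.$$ Conversely, for every pair $(W,\boldsymbol{b})\in\mathbb{R}^{p\times q}\times\mathbb{R}^p$, the map $h$ defined by this formula is a Lie group homomorphism $\mathcal{M}^{[1,1+q]}\to\mathcal{M}^{[1,1+p]}$.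
   Context: The group $\mathcal{M}^{[1,1+n]}$ is the solvable Lie group metrically equivalent to the hyperbolic space $\mathbb{H}^{n+1}\simeq \mathrm{SO}(1,1+n)/\mathrm{SO}(1+n)$, described in ''solvable coordinates'' $\Upsilon=[\Upsilon_1,\boldsymbol{\Upsilon}_2]$; its identity element is $\Upsilon=\boldsymbol{0}$. Equivalently, it is the group of real $(n+2)\times(n+2)$ matrices $$\mathbb{L}(\Upsilon)=\begin{bmatrix}e^{\Upsilon_1}&\sqrt2 e^{\Upsilon_1}\boldsymbol{\Upsilon}_2^\intercal&-e^{\Upsilon_1}|\boldsymbol{\Upsilon}_2|^2\\0&\mathbb{I}_n&-\sqrt2\boldsymbol{\Upsilon}_2\\0&0&e^{-\Upsilon_1}\end{bmatrix}$$ under matrix multiplication, with $\mathbb{L}(\Psi*\Upsilon)=\mathbb{L}(\Psi)\mathbb{L}(\Upsilon)$. *)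

From HB Require Import structures.
From mathcomp Require Import all_boot all_order all_algebra.
From mathcomp Require Import all_classical all_reals all_analysis.
Set Implicit Arguments. Unset Strict Implicit. Unset Printing Implicit Defensive.
Import Order.TTheory GRing.Theory Num.Theory.
Import numFieldNormedType.Exports.
Local Open Scope ring_scope.

Definition Mpt (R : realType) (n : nat) := (R * 'cV[R]_n)%type.

Definition Mmul (R : realType) (n : nat) (Psi Ups : Mpt R n) : Mpt R n :=
  (Ups.1 + Psi.1, Ups.2 + expR (- Ups.1) *: Psi.2).

Fixpoint Ck (R : realType) (U V : normedModType R) (k : nat) (f : U -> V) : Prop :=
  match k with
  | 0%N => continuous f
  | k'.+1 => (forall x, differentiable f x) /\ (forall v : U, Ck k' (fun x => 'D_v f x))
  end.

Definition smooth (R : realType) (U V : normedModType R) (f : U -> V) : Prop :=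
  forall k, Ck k f.

Definition lie_hom (R : realType) (q p : nat) (h : Mpt R q -> Mpt R p) : Prop :=
  smooth h /\ forall Psi Ups, h (Mmul Psi Ups) = Mmul (h Psi) (h Ups).

(* The image of a Lie group homomorphism is an (immersed) Lie subgroup whose
   dimension is the rank of the differential of h at the identity 0.
   "dimension > 1" = this rank is at least 2, i.e. the range of 'd h 0
   contains two linearly independent vectors. *)
Definition image_dim_gt1 (R : realType) (q p : nat) (h : Mpt R q -> Mpt R p) : Prop :=
  exists u v : Mpt R q,
    forall a b : R, a *: ('d h 0 u) + b *: ('d h 0 v) = 0 -> a = 0 /\ b = 0.

Definition affine_hom (R : realType) (q p : nat) (W : 'M[R]_(p, q)) (b : 'cV[R]_p)
  (Ups : Mpt R q) : Mpt R p :=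
  (Ups.1, W *m Ups.2 + (1 - expR (- Ups.1)) *: b).

(* Since (t, u) = (t, 0) * (0, u), a homomorphism h is determined by the
   dilations (t, 0) and the translations (0, v).  The homomorphism identities
   kill the first coordinate of h (0, v), make W v := (h (0, v)).2 additive
   with W (e^{-t} v) = e^{-phi t} W v for the additive map phi t := (h (t, 0)).1,
   and make g t := (h (t, 0)).2 a cocycle for phi.  If W = 0, then h factors
   through the first coordinate and its differential at 0 has rank at most 1.
   Otherwise c |-> e^{-phi (- ln c)} is an additive map of (0, +oo) into
   itself fixing 1, hence the identity; so phi = id, W is linear, i.e. a
   matrix, and the cocycle identity forces g t = (1 - e^{-t}) b.  Conversely,
   the affine formula is a homomorphism by direct computation and is smooth as
   the sum of a linear map, a constant and e^{-Ups1} times a constant. *)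

From HB Require Import structures.
From mathcomp Require Import all_boot all_order all_algebra.
From mathcomp Require Import all_classical all_reals all_analysis.
From mathcomp Require Import lra ring.
Import Order.TTheory GRing.Theory Num.Theory.
Import numFieldNormedType.Exports.
Set Implicit Arguments.
Unset Strict Implicit.
Unset Printing Implicit Defensive.
Local Open Scope ring_scope.

Lemma exists_nat_between (R : realType) (x y : R) : 0 <= x -> x < y ->
  exists n k : nat, n.+1%:R * x < k%:R < n.+1%:R * y.
Proof.
move=> x0 xy; pose n := Num.bound (y - x)^-1.
have gap : 1 < n.+1%:R * (y - x).
  rewrite -ltr_pdivrMr ?subr_gt0 // div1r.
  apply: (lt_le_trans (archi_boundP _)); first by rewrite invr_ge0 subr_ge0 ltW.
  by rewrite ler_nat.
have nx0 : 0 <= n.+1%:R * x by rewrite mulr_ge0.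
exists n, (Num.truncn (n.+1%:R * x)).+1; rewrite truncnS_gt /=.
apply: (le_lt_trans (y := n.+1%:R * x + 1)); last by move: gap; rewrite mulrBr; lra.
by rewrite -addn1 natrD lerD2r truncn_le.
Qed.

Lemma pos_additive_id (R : realType) (m : R -> R) :
  (forall c, 0 < c -> 0 < m c) ->
  (forall c d, 0 < c -> 0 < d -> m (c + d) = m c + m d) -> m 1 = 1 ->
  forall c, 0 < c -> m c = c.
Proof.
move=> m_gt0 mD m1.
have mMn n c : 0 < c -> m (n.+1%:R * c) = n.+1%:R * m c.
  move=> c0; elim: n => [|n IH]; first by rewrite !mul1r.
  by rewrite -addn1 natrD !mulrDl !mul1r mD ?IH // mulr_gt0.
have m_nat k : 0 < k%:R :> R -> m k%:R = k%:R.
  by case: k => [|k] k0; [rewrite ltxx in k0 | rewrite -[k.+1%:R]mulr1 mMn // m1].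
have m_lt c d : 0 < c -> c < d -> m c < m d.
  move=> c0 cd; rewrite -(subrK c d) mD ?subr_gt0 //.
  by rewrite ltrDr m_gt0 // subr_gt0.
move=> c c0; have mc0 := m_gt0 c c0.
case: (ltgtP (m c) c) => // [mc_lt|mc_gt]; exfalso.
- have [n [k /andP[nk kn]]] := exists_nat_between (ltW mc0) mc_lt.
  have k0 : 0 < k%:R :> R by apply: le_lt_trans nk; rewrite mulr_ge0 ?ltW.
  by have := m_lt _ _ k0 kn; rewrite m_nat // mMn //; lra.
- have [n [k /andP[nk kn]]] := exists_nat_between (ltW c0) mc_gt.
  have k0 : 0 < k%:R :> R by apply: le_lt_trans nk; rewrite mulr_ge0 ?ltW.
  by have := m_lt _ _ (mulr_gt0 (ltr0Sn R n) c0) nk; rewrite m_nat // mMn //; lra.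
Qed.

Lemma linear_mulmx_cV (R : comNzRingType) m n (f : 'cV[R]_m -> 'cV[R]_n) :
  linear f -> exists M : 'M[R]_(n, m), forall u, f u = M *m u.
Proof.
move=> f_lin.
pose fL : {linear _ -> _} := HB.pack f (GRing.isLinear.Build _ _ _ _ _ f_lin).
exists (lin1_mx (trmx \o fL \o trmx))^T => u.
by rewrite -[_ *m u]trmxK trmx_mul trmxK mul_rV_lin1 /= !trmxK.
Qed.

Lemma diff_fst_factor (R : realType) (U V : normedModType R) (f : R * U -> V) :
  differentiable f 0 -> (forall x, f x = f (x.1, 0)) ->
  forall w, 'd f 0 w = w.1 *: 'd f 0 (1, 0).
Proof.
move=> df f_fst.
pose pi (x : R * U) : R * U := (x.1, 0).
have pi_lin : linear pi.
  by move=> a x y; rewrite /pi; congr pair; rewrite /= scaler0 addr0.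
pose piL : {linear _ -> _} := HB.pack pi (GRing.isLinear.Build _ _ _ _ _ pi_lin).
have pi_cont : continuous piL.
  move=> x; apply: (@cvg_pair _ _ _ _ (nbhs x.1) (nbhs (0 : U)) _ _ _ _ _ cvg_fst).
  exact: cvg_cst.
have f_pi : f \o piL = f by apply/funext => x; rewrite /= -f_fst.
have dpi : differentiable piL 0 := linear_differentiable _ pi_cont.
have dE : 'd f 0 = 'd f 0 \o piL :> (R * U -> V).
  by rewrite -{1}f_pi diff_comp // diff_lin.
move=> w; rewrite {1}dE /=.
have -> : pi w = w.1 *: ((1, 0) : R * U).
  by congr pair; [exact/esym/mulr1 | exact/esym/scaler0].
exact: linearZ.
Qed.

Lemma image_dim_le1 (R : realType) (q p : nat) (h : Mpt R q -> Mpt R p) :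
  (forall w, 'd h 0 w = w.1 *: 'd h 0 (1, 0)) -> ~ image_dim_gt1 h.
Proof.
move=> dh [u [v indep]].
have [_ u1] : v.1 = 0 /\ - u.1 = 0.
  by apply: indep; rewrite (dh u) (dh v) !scalerA mulNr scaleNr mulrC subrr.
have [] := indep 1 0; last by move/eqP; rewrite oner_eq0.
by rewrite (dh u) -[u.1]opprK u1 oppr0 !scale0r scaler0 addr0.
Qed.

Section MmulFactors.
Variables (R : realType) (n : nat).

Lemma Mmul_dil_transl t u : Mmul ((t, 0) : Mpt R n) (0, u) = (t, u).
Proof. by rewrite /Mmul /= add0r scaler0 addr0. Qed.

Lemma Mmul_transl v w : Mmul ((0, v) : Mpt R n) (0, w) = (0, w + v).
Proof. by rewrite /Mmul /= addr0 oppr0 expR0 scale1r. Qed.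

Lemma Mmul_transl_dil v t : Mmul ((0, v) : Mpt R n) (t, 0) = (t, expR (- t) *: v).
Proof. by rewrite /Mmul /= addr0 add0r. Qed.

Lemma Mmul_dil s t : Mmul ((s, 0) : Mpt R n) (t, 0) = (t + s, 0).
Proof. by rewrite /Mmul /= scaler0 addr0. Qed.

End MmulFactors.

Section HomStructure.
Variables (R : realType) (q p : nat) (h : Mpt R q -> Mpt R p).
Hypothesis h_mul : forall Psi Ups, h (Mmul Psi Ups) = Mmul (h Psi) (h Ups).

Let A v := (h (0, v)).1.
Let W v := (h (0, v)).2.
Let phi t := (h (t, 0)).1.
Let g t := (h (t, 0)).2.

Lemma hom_dil_transl t u : h (t, u) = (A u + phi t, W u + expR (- A u) *: g t).
Proof. by rewrite -Mmul_dil_transl h_mul. Qed.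

Lemma hom_transl_fst_additive v w : A (w + v) = A w + A v.
Proof. by rewrite /A -Mmul_transl h_mul. Qed.

Lemma hom_transl_fst0 v : A v = 0.
Proof.
have A_dil t w : A (expR (- t) *: w) = A w.
  have := congr1 fst (h_mul (0, w) (t, 0)).
  by rewrite Mmul_transl_dil hom_dil_transl /= -/(A w) -/(phi t); lra.
have := A_dil (- ln 2) v.
by rewrite opprK lnK ?posrE // scaler_nat mulr2n hom_transl_fst_additive; lra.
Qed.

Lemma hom_decomp t u : h (t, u) = (phi t, W u + g t).
Proof. by rewrite hom_dil_transl hom_transl_fst0 oppr0 expR0 scale1r add0r. Qed.

Lemma hom_transl_additive v w : W (w + v) = W w + W v.
Proof.
by rewrite /W -Mmul_transl h_mul /Mmul /= -/(A w) hom_transl_fst0 oppr0 expR0 scale1r.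
Qed.

Lemma hom_transl0 : W 0 = 0.
Proof. by apply: (addrI (W 0)); rewrite -hom_transl_additive !addr0. Qed.

Lemma hom_translN v : W (- v) = - W v.
Proof. by apply: (addrI (W v)); rewrite -hom_transl_additive !subrr hom_transl0. Qed.

Lemma hom_transl_dil t v : W (expR (- t) *: v) = expR (- phi t) *: W v.
Proof.
have := congr1 snd (h_mul (0, v) (t, 0)).
by rewrite Mmul_transl_dil hom_decomp /Mmul /= addrC => /addrI.
Qed.

Lemma hom_dil_fst_additive s t : phi (t + s) = phi t + phi s.
Proof. by rewrite /phi -Mmul_dil h_mul. Qed.

Lemma hom_dil_cocycle s t : g (t + s) = g t + expR (- phi t) *: g s.
Proof. by rewrite /g -Mmul_dil h_mul. Qed.

Section Nondegenerate.
Variable v0 : 'cV[R]_q.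
Hypothesis Wv0 : W v0 != 0.

(* m c is the factor by which W scales c *: v0; reading it on a nonzero entry
   of W v0 shows that m is additive. *)
Lemma hom_dil_fst t : phi t = t.
Proof.
have /cV0Pn [i Wv0_i] := Wv0.
pose m c := expR (- phi (- ln c)).
have W_scale c : 0 < c -> W (c *: v0) = m c *: W v0.
  by move=> c0; rewrite -hom_transl_dil opprK lnK.
have m_id : forall c, 0 < c -> m c = c.
  apply: pos_additive_id => [c _|c d c0 d0|]; first exact: expR_gt0.
    apply: (mulIf Wv0_i).
    have := congr1 (fun M : 'cV[R]_p => M i 0) (W_scale _ (addr_gt0 c0 d0)).
    by rewrite scalerDl hom_transl_additive !W_scale // !mxE mulrDl => <-.
  have phi0 : phi 0 = 0 by have := hom_dil_fst_additive 0 0; rewrite addr0; lra.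
  by rewrite /m ln1 oppr0 phi0 oppr0 expR0.
by have := m_id _ (expR_gt0 (- t)); rewrite /m expRK opprK => /expR_inj /oppr_inj.
Qed.

Lemma hom_translZ a v : W (a *: v) = a *: W v.
Proof.
have W_pos c w : 0 < c -> W (c *: w) = c *: W w.
  by move=> c0; have := hom_transl_dil (- ln c) w; rewrite hom_dil_fst opprK lnK.
case: (ltgtP a 0) => [a_lt0|a_gt0|->]; last by rewrite !scale0r hom_transl0.
- by apply: oppr_inj; rewrite -hom_translN -!scaleNr W_pos // oppr_gt0.
- exact: W_pos.
Qed.

Lemma hom_transl_mulmx : exists M : 'M[R]_(p, q), forall u, W u = M *m u.
Proof. by apply: linear_mulmx_cV => a u v; rewrite hom_transl_additive hom_translZ. Qed.

(* Evaluate the cocycle identity at t + 1 = 1 + t. *)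
Lemma hom_dil_snd : exists b : 'cV[R]_p, forall t, g t = (1 - expR (- t)) *: b.
Proof.
have e1 : 1 - expR (- 1) != 0 :> R.
  by rewrite subr_eq0 eq_sym lt_eqF // expR_lt1 ltrN10.
exists ((1 - expR (- 1))^-1 *: g 1) => t.
have := hom_dil_cocycle 1 t; rewrite addrC hom_dil_cocycle !hom_dil_fst => gt1.
apply: (scalerI e1); rewrite !scalerA mulrAC mulfV // mul1r !scalerBl !scale1r.
by apply/eqP; rewrite subr_eq addrAC eq_sym subr_eq gt1.
Qed.

Lemma hom_affine : exists (M : 'M[R]_(p, q)) (b : 'cV[R]_p),
  forall Ups, h Ups = affine_hom M b Ups.
Proof.
have [M WM] := hom_transl_mulmx; have [b gb] := hom_dil_snd.
by exists M, b => -[t u]; rewrite hom_decomp hom_dil_fst WM gb.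
Qed.

End Nondegenerate.

Lemma hom_transl_neq0 : differentiable h 0 -> image_dim_gt1 h -> exists v, W v != 0.
Proof.
move=> dh; apply: contraPP => /forallNP W0 img.
have W_0 v : W v = 0 by have /negP/negPn/eqP := W0 v.
apply: (image_dim_le1 _ img); apply: diff_fst_factor => // -[t u].
by rewrite !hom_decomp W_0 hom_transl0.
Qed.

End HomStructure.

Section SmoothFunctions.
Variables (R : realType) (U V : normedModType R).

Lemma Ck_cst k (c : V) : Ck k (cst c : U -> V).
Proof.
elim: k c => [|k IH] c /=; first exact: cst_continuous.
split=> [x|v]; first exact: differentiable_cst.
by rewrite (_ : (fun x => _) = cst 0) //; apply/funext => x; rewrite derive_cst.
Qed.

Lemma CkD k (f g : U -> V) : Ck k f -> Ck k g -> Ck k (f + g).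
Proof.
elim: k f g => [|k IH] f g /=.
  by move=> fc gc x; exact: continuousD (fc x) (gc x).
move=> [df Df] [dg Dg]; split=> [x|v]; first exact: differentiableD.
rewrite (_ : (fun x => _) = (fun x => 'D_v f x) + (fun x => 'D_v g x)); first exact: IH.
by apply/funext => x; rewrite deriveD //; exact: diff_derivable.
Qed.

Lemma Ck_linear k (f : {linear U -> V}) : continuous f -> Ck k f.
Proof.
case: k => [//|k] fc /=; split=> [x|v]; first exact: linear_differentiable.
rewrite (_ : (fun x => _) = cst (f v)); first exact: Ck_cst.
by apply/funext => x; rewrite deriveE ?diff_lin //; exact: linear_differentiable.
Qed.

Lemma is_diff_expR (r : R) : is_diff r expR (fun s : R => s * expR r).
Proof.
apply: DiffDef; first exact/derivable1_diffP/derivable_expR.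
rewrite deriv1E; last exact: derivable_expR.
by apply/funext => s; rewrite derive1E derive_val.
Qed.

Lemma is_diff_expR_scale (l : {linear U -> R}) (D : V) x : continuous l ->
  is_diff x (fun y => expR (l y) *: D) (fun v => expR (l x) *: (l v *: D)).
Proof.
move=> lc; have dl : is_diff x l l.
  by apply: DiffDef; [exact: linear_differentiable | exact: diff_lin].
have [del del_val] := is_diff_comp dl (is_diff_expR (l x)).
apply: DiffDef; first exact: (differentiableZl D del).
rewrite (diffZl D del) del_val.
by apply/funext => v; rewrite scalerA mulrC.
Qed.

Lemma Ck_expR_scale k (l : {linear U -> R}) (D : V) : continuous l ->
  Ck k (fun x => expR (l x) *: D).
Proof.
move=> lc; elim: k D => [|k IH] D /=.
  move=> x; have [dF _] := is_diff_expR_scale D x lc.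
  exact: differentiable_continuous.
split=> [x|v]; first by have [] := is_diff_expR_scale D x lc.
rewrite (_ : (fun x => _) = fun x => expR (l x) *: (l v *: D)); first exact: IH.
apply/funext => x; have [dF dF_val] := is_diff_expR_scale D x lc.
by rewrite deriveE // dF_val.
Qed.

End SmoothFunctions.

Lemma mulmx_cV_continuous (R : realType) m n (M : 'M[R]_(m, n)) :
  continuous (fun v : 'cV[R]_n => M *m v).
Proof.
have -> : (fun v : 'cV[R]_n => M *m v) =
          \sum_(j < n) (fun v : 'cV[R]_n => v j 0 *: col j M).
  apply/funext => v; rewrite fct_sumE; apply/matrixP => i k.
  by rewrite !mxE summxE; apply: eq_bigr => j _; rewrite !mxE (ord1 k) mulrC.
move=> v; apply: differentiable_continuous; apply: differentiable_sum => j.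
exact/differentiableZl/differentiable_coord.
Qed.

Section AffineHom.
Variables (R : realType) (q p : nat) (W : 'M[R]_(p, q)) (b : 'cV[R]_p).

Lemma affine_hom_mul Psi Ups :
  affine_hom W b (Mmul Psi Ups) = Mmul (affine_hom W b Psi) (affine_hom W b Ups).
Proof.
rewrite /affine_hom /Mmul /=; congr pair.
rewrite opprD expRD mulmxDr -scalemxAr scalerDr scalerA.
set a := expR (- Ups.1); set c := expR (- Psi.1).
have -> : (1 - a * c) *: b = (1 - a) *: b + (a * (1 - c)) *: b.
  by rewrite -scalerDl; congr (_ *: _); ring.
by rewrite !addrA; congr (_ + _); rewrite addrAC.
Qed.

Lemma affine_hom_smooth : smooth (affine_hom W b).
Proof.
pose L (x : Mpt R q) : Mpt R p := (x.1, W *m x.2).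
have L_lin : linear L.
  move=> a x y; congr pair; rewrite /= mulmxDr scalemxAr //.
pose LL : {linear _ -> _} := HB.pack L (GRing.isLinear.Build _ _ _ _ _ L_lin).
have L_cont : continuous LL.
  move=> x; apply: (@cvg_pair _ _ _ _ (nbhs x.1) (nbhs (W *m x.2)) _ _ _ _ _ cvg_fst).
  have snd_cont : {for x, continuous (snd : Mpt R q -> 'cV[R]_q)} by exact: cvg_snd.
  by have := continuous_comp snd_cont (@mulmx_cV_continuous R p q W x.2); exact.
pose l (x : Mpt R q) : R := - x.1.
have l_lin : linear l by move=> a x y; rewrite /l /= opprD scalerN.
pose lL : {linear _ -> _} := HB.pack l (GRing.isLinear.Build _ _ _ _ _ l_lin).
have l_cont : continuous lL by move=> x; apply: continuousN; exact: cvg_fst.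
have -> : affine_hom W b = (LL : Mpt R q -> Mpt R p) + cst (0, b)
                           + (fun x => expR (lL x) *: ((0, - b) : Mpt R p)).
  apply/funext => x; rewrite /affine_hom /=; congr pair.
    by change (x.1 = x.1 + 0 + expR (- x.1) * 0); rewrite mulr0 !addr0.
  change (W *m x.2 + (1 - expR (- x.1)) *: b = W *m x.2 + b + expR (- x.1) *: - b).
  by rewrite scalerBl scale1r scalerN addrA.
move=> k; apply: CkD; last exact: Ck_expR_scale.
by apply: CkD; [exact: Ck_linear | exact: Ck_cst].
Qed.

End AffineHom.

Lemma affine_hom_inj (R : realType) (q p : nat)
    (W W' : 'M[R]_(p, q)) (b b' : 'cV[R]_p) :
  affine_hom W b =1 affine_hom W' b' -> W = W' /\ b = b'.
Proof.
move=> E; have WW' : W = W'.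
  apply/matrixP => i j; have := congr1 snd (E (0, delta_mx j 0)).
  rewrite /affine_hom /= oppr0 expR0 subrr !scale0r !addr0 -!colE.
  by move=> /(congr1 (fun C : 'cV[R]_p => C i 0)); rewrite !mxE.
split=> //; have := congr1 snd (E (1, 0)); rewrite /affine_hom /= WW' mulmx0 !add0r.
by apply: scalerI; rewrite subr_eq0 eq_sym lt_eqF // expR_lt1 ltrN10.
Qed.

Theorem theorem2 (R : realType) (p q : nat) (hp : (1 <= p)%N) (hq : (1 <= q)%N) :
  (forall h : Mpt R q -> Mpt R p,
     lie_hom h -> image_dim_gt1 h ->
     exists! Wb : 'M[R]_(p, q) * 'cV[R]_p,
       forall Ups : Mpt R q, h Ups = affine_hom Wb.1 Wb.2 Ups) /\
  (forall (W : 'M[R]_(p, q)) (b : 'cV[R]_p), lie_hom (affine_hom W b)).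
Proof.
split=> [h [h_smooth h_mul] h_img | W b]; last first.
  by split; [exact: affine_hom_smooth | exact: affine_hom_mul].
have [h_diff _] := h_smooth 1%N.
have [v0 Wv0] := hom_transl_neq0 h_mul (h_diff 0) h_img.
have [W [b hWb]] := hom_affine h_mul Wv0.
exists (W, b); split=> // -[W' b'] /= hW'b'.
by have [-> ->] : W = W' /\ b = b' by apply: affine_hom_inj => Ups; rewrite -hWb.
Qed.
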